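(* Let $\mathcal{F}$ be an argumentation framework and $S\subseteq A_{\mathcal{F}}$. If $\beta$ is an ordinal with $\beta>\alpha_S(a)$ for every $a\in A_{\mathcal{F}}$, then $\Delta_{\mathcal{F},S}=\Delta^\beta_{\mathcal{F},S}$.
   Context: An argumentation framework is $\mathcal{F}=(A_{\mathcal{F}},R_{\mathcal{F}})$ with $R_{\mathcal{F}}\subseteq A_{\mathcal{F}}\times A_{\mathcal{F}}$; $a\rightarrow b$ means $(a,b)\in R_{\mathcal{F}}$. $\mathcal{F}|_B=(A_{\mathcal{F}}\cap B,R_{\mathcal{F}}\cap(B\times B))$. $\mathrm{SCC}(a)$ is the set of $b$ with directed attack paths (possibly of length 0) from $a$ to $b$ and back. $D_S(X)=\{b\in X:\exists a\in S\setminus X,\ a\rightarrow b\}$. $C^0_S(a)=\mathrm{SCC}(a)$; $C^{\alpha+1}_S(a)$ = the strongly connected component of $a$ in $\mathcal{F}|_{C^\alpha_S(a)\setminus D_S(C^\alpha_S(a))}$ (empty if $a$ is not in that set); for limit $\lambda$, $C^\lambda_S(a)$ = the component of $a$ in $\mathcal{F}|_{\bigcap_{\alpha<\lambda}C^\alpha_S(a)}$. $\alpha_S(a)$ is the least ordinal $\alpha$ such that $a\notin C^\alpha_S(a)$ or $C^{\alpha+1}_S(a)=C^\alpha_S(a)$. $a\Rightarrow^B_{\mathcal{F}}b$ means there is a directed attack path from $a$ to $b$ in $\mathcal{F}|_B$. For $D\subseteq A_{\mathcal{F}}$, $\Delta_{\mathcal{F},S}(D)=\{a\in A_{\mathcal{F}}:\exists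 b\in S\,(b\rightarrow a\text{ and not }a\Rightarrow^{A_{\mathcal{F}}\setminus D}_{\mathcal{F}}b)\}$; this operator on subsets of $A_{\mathcal{F}}$ is monotone and $\Delta_{\mathcal{F},S}$ (as a set) denotes its least fixed point. Iterates: $\Delta^0_{\mathcal{F},S}=\emptyset$, $\Delta^{\alpha+1}_{\mathcal{F},S}=\Delta_{\mathcal{F},S}(\Delta^\alpha_{\mathcal{F},S})$, $\Delta^\lambda_{\mathcal{F},S}=\bigcup_{\alpha<\lambda}\Delta^\alpha_{\mathcal{F},S}$ for limit $\lambda$. *)

(* argumentation frameworks may be infinite; sets are predicates. *)
From Stdlib Require Import Classical ClassicalEpsilon Relation_Operators Wellfounded.

Set Implicit Arguments.

Definition aset (A : Type) := A -> Prop.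

Definition set_eq {A} (X Y : aset A) : Prop := forall x, X x <-> Y x.
Definition subset {A} (X Y : aset A) : Prop := forall x, X x -> Y x.

Record AF := MkAF {
  arg : Type;
  att : arg -> arg -> Prop   (* att a b  <->  a -> b *)
}.

Definition reach (F : AF) (B : aset (arg F)) (a b : arg F) : Prop :=
  B a /\ B b /\
  clos_refl_trans _ (fun x y => B x /\ B y /\ att F x y) a b.

(** Strongly connected component of a in F|_B (empty if a is not in B). *)
Definition comp (F : AF) (B : aset (arg F)) (a : arg F) : aset (arg F) :=
  fun b => reach F B a b /\ reach F B b a.

Definition SCC (F : AF) (a : arg F) : aset (arg F) :=
  comp F (fun _ => True) a.

Definition DS (F : AF) (S X : aset (arg F)) : aset (arg F) :=
  fun b => X b /\ exists a, S a /\ ~ X a /\ att F a b.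

(** Ordinals: an ordinal is represented as an element of a well-ordered type
    (strict, total, well-founded order). *)
Record wellorder := WellOrder {
  wo_car :> Type;
  wo_lt : wo_car -> wo_car -> Prop;
  wo_trans : forall x y z, wo_lt x y -> wo_lt y z -> wo_lt x z;
  wo_irrefl : forall x, ~ wo_lt x x;
  wo_total : forall x y, wo_lt x y \/ x = y \/ wo_lt y x;
  wo_wf : well_founded wo_lt
}.

(** [y] is the immediate predecessor of [x] (i.e. x = y + 1). *)
Definition ipred (W : wellorder) (y x : W) : Prop :=
  wo_lt W y x /\ ~ (exists z, wo_lt W y z /\ wo_lt W z x).

Lemma ipred_lt (W : wellorder) (y x : W) : ipred W y x -> wo_lt W y x.
Proof. intros [H _]; exact H. Qed.

(** Transfinite iteration of set-valued sequences:
    value at 0 is [base]; at a successor y+1 it is [sc] (value at y);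
    at a limit x it is [lim] applied to the family of earlier values. *)
Definition titer (A : Type) (W : wellorder) (base : aset A)
  (sc : aset A -> aset A)
  (lim : forall x : W, ({y : W | wo_lt W y x} -> aset A) -> aset A) : W -> aset A :=
  Fix (wo_wf W) (fun _ => aset A)
    (fun x rec =>
       match excluded_middle_informative (exists y, wo_lt W y x) with
       | right _ => base
       | left _ =>
         match excluded_middle_informative (exists y, ipred W y x) with
         | left h =>
             let y := proj1_sig (constructive_indefinite_description _ h) in
             let hy := proj2_sig (constructive_indefinite_description _ h) in
             sc (rec y (ipred_lt hy))
         | right _ => lim x (fun p => rec (proj1_sig p) (proj2_sig p))
         end
       end).

Definition Cstep (F : AF) (S : aset (arg F)) (a : arg F) (X : aset (arg F))
  : aset (arg F) :=
  comp F (fun b => X b /\ ~ DS F S X b) a.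

Definition Citer (F : AF) (S : aset (arg F)) (a : arg F) (W : wellorder)
  : W -> aset (arg F) :=
  titer W (SCC F a) (Cstep F S a)
    (fun x f => comp F (fun b => forall p, f p b) a).

Definition alpha_stop (F : AF) (S : aset (arg F)) (a : arg F) (W : wellorder)
  (al : W) : Prop :=
  ~ Citer F S a W al a \/ set_eq (Cstep F S a (Citer F S a W al)) (Citer F S a W al).

Definition is_alphaS (F : AF) (S : aset (arg F)) (a : arg F) (W : wellorder)
  (al : W) : Prop :=
  alpha_stop F S a W al /\ forall g, alpha_stop F S a W g -> ~ wo_lt W g al.

Definition DeltaOp (F : AF) (S : aset (arg F)) (D : aset (arg F)) : aset (arg F) :=
  fun a => exists b, S b /\ att F b a /\ ~ reach F (fun x => ~ D x) a b.

Definition DeltaIter (F : AF) (S : aset (arg F)) (W : wellorder) : W -> aset (arg F) :=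
  titer W (fun _ => False) (DeltaOp F S)
    (fun x f => fun z => exists p, f p z).

Definition is_lfp (A : Type) (Op : aset A -> aset A) (D : aset A) : Prop :=
  set_eq (Op D) D /\ forall E, set_eq (Op E) E -> subset D E.

From Stdlib Require Import Classical ClassicalEpsilon Relation_Operators Wellfounded.
From Stdlib Require Import FunctionalExtensionality PropExtensionality.

(** The argument rests on one invariant, proved by transfinite induction:
    [C^α_S(a)] is always the strongly connected component of [a] in the
    complement of [Δ^α_{F,S}].  At [α = α_S(a)] with [a ∉ Δ^α] this component
    contains [a], so it is a fixed point [C] of the step [C ↦ C^{+1}].  The
    complement of such a [C] is a prefixed point of [Δ_{F,S}]: an attacker from
    [S] outside [C] would put its target in [D_S(C)], and one inside [C] is
    reached back within [C].  So [C] avoids every [Δ^γ]; hence [Δ^β] is closed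
    under the operator, and, lying below every prefixed point, it is its least
    fixed point. *)

Set Implicit Arguments.

Definition compl (A : Type) (X : aset A) : aset A := fun x => ~ X x.

Definition monotone (A : Type) (Op : aset A -> aset A) : Prop :=
  forall X Y, subset X Y -> subset (Op X) (Op Y).

Lemma aset_ext (A : Type) (X Y : aset A) : set_eq X Y -> X = Y.
Proof.
  intros HXY. apply functional_extensionality; intros x.
  apply propositional_extensionality, HXY.
Qed.

Lemma subset_compl (A : Type) (X Y : aset A) : subset X Y -> subset (compl Y) (compl X).
Proof. intros HXY x HY HX. exact (HY (HXY x HX)). Qed.

Section Ordinals.
Variable W : wellorder.

Lemma lt_ipred_cases {y x z : W} :
  ipred W y x -> wo_lt W z x -> z = y \/ wo_lt W z y.
Proof.
  intros [_ Hnone] Hzx. destruct (wo_total W z y) as [Hzy | [Hzy | Hyz]]; auto.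
  exfalso. apply Hnone. eauto.
Qed.

Lemma ipred_unique (y y' x : W) : ipred W y x -> ipred W y' x -> y = y'.
Proof.
  intros Hy Hy'. destruct (lt_ipred_cases Hy (ipred_lt Hy')) as [-> | Hlt]; auto.
  exfalso. apply (proj2 Hy'). exists y. split; [exact Hlt | exact (ipred_lt Hy)].
Qed.
End Ordinals.

Section TransfiniteIteration.
Variables (W : wellorder) (A : Type) (base : aset A) (sc : aset A -> aset A).
Variable lim : forall x : W, ({y : W | wo_lt W y x} -> aset A) -> aset A.
Notation T := (titer W base sc lim).

Lemma titer_cases (x : W) :
  ((~ exists y, wo_lt W y x) /\ T x = base) \/
  (exists y, ipred W y x /\ T x = sc (T y)) \/
  ((exists y, wo_lt W y x) /\ (~ exists y, ipred W y x) /\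
    T x = lim x (fun p => T (proj1_sig p))).
Proof.
  unfold titer. rewrite Fix_eq.
  - destruct (excluded_middle_informative (exists y, wo_lt W y x)) as [Hlt | Hlt];
      [| left; auto].
    destruct (excluded_middle_informative (exists y, ipred W y x)) as [Hip | Hip];
      [| right; right; auto].
    right; left. destruct (constructive_indefinite_description _ Hip) as [y Hy].
    exists y. auto.
  - intros x' f g Hfg.
    destruct excluded_middle_informative; [| reflexivity].
    destruct excluded_middle_informative; [rewrite Hfg; reflexivity |].
    f_equal. apply functional_extensionality; intros p. apply Hfg.
Qed.

Lemma titer_zero (x : W) : (~ exists y, wo_lt W y x) -> T x = base.
Proof.
  intros Hzero.
  destruct (titer_cases x) as [[_ E] | [[y [Hy _]] | [Hlt _]]]; [exact E | |];
    exfalso; apply Hzero; eauto using ipred_lt.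
Qed.

Lemma titer_succ (x y : W) : ipred W y x -> T x = sc (T y).
Proof.
  intros Hy.
  destruct (titer_cases x) as [[Hzero _] | [[y' [Hy' E]] | [_ [Hnip _]]]].
  - exfalso. apply Hzero. exists y. exact (ipred_lt Hy).
  - rewrite (ipred_unique Hy Hy'). exact E.
  - exfalso. apply Hnip. eauto.
Qed.

Lemma titer_limit (x : W) :
  (exists y, wo_lt W y x) -> (~ exists y, ipred W y x) ->
  T x = lim x (fun p => T (proj1_sig p)).
Proof.
  intros Hlt Hnip.
  destruct (titer_cases x) as [[Hzero _] | [[y [Hy _]] | [_ [_ E]]]]; [| | exact E];
    exfalso; eauto.
Qed.

Lemma titer_ind (P : W -> aset A -> Prop) :
  (forall x, (~ exists y, wo_lt W y x) -> P x base) ->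
  (forall x y, ipred W y x -> P y (T y) -> P x (sc (T y))) ->
  (forall x, (exists y, wo_lt W y x) -> (~ exists y, ipred W y x) ->
     (forall y, wo_lt W y x -> P y (T y)) -> P x (lim x (fun p => T (proj1_sig p)))) ->
  forall x, P x (T x).
Proof.
  intros Hzero Hsucc Hlim x.
  induction x as [x IH] using (well_founded_ind (wo_wf W)).
  destruct (titer_cases x) as [[Hz E] | [[y [Hy E]] | [Hlt [Hnip E]]]]; rewrite E.
  - exact (Hzero x Hz).
  - exact (Hsucc x y Hy (IH y (ipred_lt Hy))).
  - exact (Hlim x Hlt Hnip IH).
Qed.
End TransfiniteIteration.

Definition kleene_iter (A : Type) (Op : aset A -> aset A) (W : wellorder) : W -> aset A :=
  titer W (fun _ => False) Op (fun _ f z => exists p, f p z).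

Section KleeneIteration.
Variables (A : Type) (Op : aset A -> aset A).
Context {W : wellorder}.
Hypothesis Op_mono : monotone Op.
Notation K := (kleene_iter Op W).

Lemma kleene_iter_post (x : W) : subset (K x) (Op (K x)).
Proof.
  revert x. apply titer_ind with (P := fun _ X => subset X (Op X)).
  - intros _ _ z [].
  - intros _ y _ Hy. exact (Op_mono Hy).
  - intros x _ _ IH z [[y Hy] Hz].
    apply (Op_mono (X := K y)); [| exact (IH y Hy z Hz)].
    intros w Hw. exists (exist _ y Hy). exact Hw.
Qed.

Lemma kleene_iter_mono {y x : W} : wo_lt W y x -> subset (K y) (K x).
Proof.
  revert y. pattern x, (K x). revert x.
  apply titer_ind with (P := fun x X => forall y, wo_lt W y x -> subset (K y) X).
  - intros x Hzero y Hy. exfalso. eauto.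
  - intros x y' Hy' IH y Hy z Hz.
    apply kleene_iter_post.
    destruct (lt_ipred_cases Hy' Hy) as [-> | Hlt]; [exact Hz | exact (IH y Hlt z Hz)].
  - intros x _ _ _ y Hy z Hz. exists (exist _ y Hy). exact Hz.
Qed.

Lemma kleene_iter_sub_prefixed (E : aset A) :
  subset (Op E) E -> forall x : W, subset (K x) E.
Proof.
  intros HE. apply titer_ind with (P := fun _ X => subset X E).
  - intros _ _ z [].
  - intros _ y _ Hy z Hz. exact (HE z (Op_mono Hy Hz)).
  - intros x _ _ IH z [[y Hy] Hz]. exact (IH y Hy z Hz).
Qed.

Lemma kleene_iter_lfp (beta : W) : subset (Op (K beta)) (K beta) -> is_lfp Op (K beta).
Proof.
  intros Hclosed. split.
  - intros z. split; [apply Hclosed | apply kleene_iter_post].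
  - intros E HE. apply kleene_iter_sub_prefixed. intros z Hz. exact (proj1 (HE z) Hz).
Qed.
End KleeneIteration.

Lemma clos_rt_restrict (A : Type) (R R' : A -> A -> Prop) (P : A -> Prop) (x y : A) :
  (forall u v, R u v -> P u -> P v -> R' u v) ->
  clos_refl_trans A R x y ->
  (forall z, clos_refl_trans A R x z -> clos_refl_trans A R z y -> P z) ->
  clos_refl_trans A R' x y.
Proof.
  intros HRR' Hxy. induction Hxy as [x y Hxy | x | x y z Hxy IHxy Hyz IHyz]; intros HP.
  - apply rt_step, HRR'; [exact Hxy | |]; apply HP; auto using rt_step, rt_refl.
  - apply rt_refl.
  - apply rt_trans with y.
    + apply IHxy. intros w Hxw Hwy. apply HP; eauto using rt_trans.
    + apply IHyz. intros w Hyw Hwz. apply HP; eauto using rt_trans.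
Qed.

Section Reachability.
Variable F : AF.
Implicit Types (B : aset (arg F)) (a b c : arg F).

Definition att_in B : arg F -> arg F -> Prop := fun x y => B x /\ B y /\ att F x y.

Lemma reach_refl B a : B a -> reach F B a a.
Proof. intros Ha. repeat split; auto using rt_refl. Qed.

Lemma reach_att B a b : B a -> B b -> att F a b -> reach F B a b.
Proof. intros Ha Hb Hab. repeat split; auto using rt_step. Qed.

Lemma reach_trans B a b c : reach F B a b -> reach F B b c -> reach F B a c.
Proof. intros [Ha [_ Hab]] [_ [Hc Hbc]]. repeat split; eauto using rt_trans. Qed.

Lemma reach_target B a b : reach F B a b -> B b.
Proof. intros [_ [Hb _]]. exact Hb. Qed.

Lemma reach_mono B B' a b : subset B B' -> reach F B a b -> reach F B' a b.
Proof.
  intros HB [Ha [Hb Hab]]. repeat split; auto.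
  apply clos_rt_restrict with (att_in B) (fun _ => True); auto.
  intros u v [Hu [Hv Huv]] _ _. repeat split; auto.
Qed.

Lemma att_in_path_target B a b : clos_refl_trans _ (att_in B) a b -> B a -> B b.
Proof. induction 1 as [x y [_ [Hy _]] | | ]; auto. Qed.

Lemma reach_restrict B B' a b :
  reach F B a b -> (forall z, reach F B a z -> reach F B z b -> B' z) -> reach F B' a b.
Proof.
  intros [Ha [Hb Hab]] Hmid.
  assert (Hon : forall z, clos_refl_trans _ (att_in B) a z ->
                          clos_refl_trans _ (att_in B) z b -> B' z).
  { intros z Haz Hzb. pose proof (att_in_path_target Haz Ha) as Hz.
    apply Hmid; repeat split; assumption. }
  repeat split; [apply Hon | apply Hon | apply clos_rt_restrict with (att_in B) B'];
    auto using rt_refl.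
  intros u v [_ [_ Huv]] Hu Hv. repeat split; assumption.
Qed.

Lemma comp_self B a : B a -> comp F B a a.
Proof. intros Ha. split; apply reach_refl; exact Ha. Qed.

Lemma comp_sub B a : subset (comp F B a) B.
Proof. intros c [Hac _]. exact (reach_target Hac). Qed.

Lemma comp_mono B B' a : subset B B' -> subset (comp F B a) (comp F B' a).
Proof. intros HB c [Hac Hca]. split; eapply reach_mono; eauto. Qed.

Lemma comp_restrict B1 B2 a :
  subset B1 B2 -> subset (comp F B2 a) B1 -> comp F B1 a = comp F B2 a.
Proof.
  intros H12 Hcomp. apply aset_ext. intros c. split; [apply comp_mono, H12 |].
  intros [Hac Hca]. split; apply reach_restrict with B2; auto;
    intros z H1 H2; apply Hcomp; split; eauto using reach_trans.
Qed.

Lemma comp_compl_union (I : Type) (Ds : I -> aset (arg F)) a :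
  comp F (fun b => forall i, comp F (compl (Ds i)) a b) a =
  comp F (compl (fun z => exists i, Ds i z)) a.
Proof.
  apply comp_restrict.
  - intros c Hc [i Hi]. exact (comp_sub (Hc i) Hi).
  - intros c Hc i. revert Hc. apply comp_mono, subset_compl.
    intros z Hz. exists i. exact Hz.
Qed.
End Reachability.

Section Components.
Variables (F : AF) (S : aset (arg F)).

Lemma DeltaOp_mono : monotone (DeltaOp F S).
Proof.
  intros D D' HD x [b [Hb [Hbx Hnr]]]. exists b. repeat split; auto.
  intros Hr. apply Hnr. revert Hr. apply reach_mono, (subset_compl HD).
Qed.

Lemma Cstep_comp_compl (a : arg F) (D : aset (arg F)) :
  subset D (DeltaOp F S D) ->
  Cstep F S a (comp F (compl D) a) = comp F (compl (DeltaOp F S D)) a.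
Proof.
  intros Hpost. unfold Cstep. apply comp_restrict.
  - intros c [HcX HcDS] [b [Hb [Hbc Hnr]]]. apply HcDS. split; [exact HcX |].
    exists b. repeat split; auto.
    intros HbX. apply Hnr. exact (reach_trans (proj2 HcX) (proj1 HbX)).
  - intros c Hc.
    assert (HcX : comp F (compl D) a c) by exact (comp_mono (subset_compl Hpost) Hc).
    split; [exact HcX |]. intros [_ [b [Hb [HbX Hbc]]]].
    apply (comp_sub Hc). exists b. repeat split; auto.
    intros Hcb. apply HbX. split.
    + exact (reach_trans (proj1 HcX) Hcb).
    + apply reach_trans with c; [| exact (proj2 HcX)].
      apply reach_att; [exact (reach_target Hcb) | exact (comp_sub HcX) | exact Hbc].
Qed.

Lemma Citer_comp_compl (W : wellorder) (a : arg F) (x : W) :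
  Citer F S a W x = comp F (compl (DeltaIter F S W x)) a.
Proof.
  revert x. unfold Citer.
  apply titer_ind with (P := fun x X => X = comp F (compl (DeltaIter F S W x)) a).
  - intros x Hzero. unfold DeltaIter. rewrite titer_zero by exact Hzero.
    unfold SCC. f_equal. apply aset_ext. intros z. unfold compl. tauto.
  - intros x y Hy IH. rewrite IH. unfold DeltaIter at 2. rewrite (titer_succ _ _ _ Hy).
    apply Cstep_comp_compl, kleene_iter_post, DeltaOp_mono.
  - intros x Hlt Hnip IH. unfold DeltaIter. rewrite titer_limit by assumption.
    etransitivity; [| apply comp_compl_union]. f_equal. apply aset_ext. intros z.
    split; intros Hz p; specialize (Hz p);
      [rewrite (IH _ (proj2_sig p)) in Hz | rewrite (IH _ (proj2_sig p))]; exact Hz.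
Qed.

Lemma DeltaOp_compl_Cstep_fixed (a : arg F) (C : aset (arg F)) :
  set_eq (Cstep F S a C) C -> subset (DeltaOp F S (compl C)) (compl C).
Proof.
  intros Hfix c [b [Hb [Hbc Hnr]]] Hc.
  pose proof (proj2 (Hfix c) Hc) as Hc'.
  destruct (classic (C b)) as [HbC | HbC].
  - apply Hnr. pose proof (proj2 (Hfix b) HbC) as Hb'.
    apply reach_mono with (fun z => C z /\ ~ DS F S C z).
    + intros z [Hz _] Hnz. exact (Hnz Hz).
    + exact (reach_trans (proj2 Hc') (proj1 Hb')).
  - apply (proj2 (comp_sub Hc')). split; [exact Hc |]. exists b. auto.
Qed.
End Components.

Theorem lemma3 (F : AF) (S : aset (arg F)) (W : wellorder) (beta : W) :
  (forall a : arg F, exists al : W, is_alphaS F S a W al /\ wo_lt W al beta) ->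
  is_lfp (DeltaOp F S) (DeltaIter F S W beta).
Proof.
  intros Halpha. apply (kleene_iter_lfp (@DeltaOp_mono F S)).
  intros x Hx. destruct (Halpha x) as [al [[Hstop _] Hal]].
  destruct (classic (DeltaIter F S W al x)) as [Hin | Hout].
  - exact (kleene_iter_mono (@DeltaOp_mono F S) Hal x Hin).
  - assert (HxC : Citer F S x W al x).
    { rewrite Citer_comp_compl. apply comp_self. exact Hout. }
    destruct Hstop as [Hnot | Hfix]; [contradiction |].
    exfalso. eapply (DeltaOp_compl_Cstep_fixed Hfix); [| exact HxC].
    revert Hx. apply DeltaOp_mono, (kleene_iter_sub_prefixed (@DeltaOp_mono F S)).
    exact (DeltaOp_compl_Cstep_fixed Hfix).
Qed.
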